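(* For every integer $n\ge 7$, the wheel $W_{1,n}$ satisfies $$\dim_{n\ell}(W_{1,n})=\left\lfloor \frac{2n}{5}\right\rfloor.$$
   Context: The wheel $W_{1,n}=K_1+C_n$ is obtained from the cycle $C_n$ by adding one vertex (the center) adjacent to all cycle vertices. $d(u,v)$ is the shortest-path distance. A set $X$ of vertices resolves two vertices $u,v$ if some $x\in X$ satisfies $d(u,x)\neq d(v,x)$. $X$ is a nonlocal resolving set if it resolves every pair of distinct non-adjacent vertices; the nonlocal metric dimension $\dim_{n\ell}$ is the minimum size of a nonlocal resolving set. *)

From mathcomp Require Import all_boot all_order.
Set Implicit Arguments. Unset Strict Implicit. Unset Printing Implicit Defensive.

Definition ball (T : finType) (e : rel T) (k : nat) (u : T) : {set T} :=
  iter k (fun S : {set T} => S :|: [set y | [exists x in S, e x y]]) [set u].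

(* Shortest-path distance: least k with v within k steps of u (k < #|T|
   always suffices when v is reachable; unreachable pairs get #|T|, which
   never happens for connected graphs such as wheels). *)
Definition gdist (T : finType) (e : rel T) (u v : T) : nat :=
  find (fun k => v \in ball e k u) (iota 0 #|T|).

Definition resolves (T : finType) (e : rel T) (X : {set T}) (u v : T) : Prop :=
  exists2 x, x \in X & gdist e u x != gdist e v x.

Definition nonlocal_resolving (T : finType) (e : rel T) (X : {set T}) : Prop :=
  forall u v : T, u != v -> ~~ e u v -> resolves e X u v.

Definition is_nl_dim (T : finType) (e : rel T) (d : nat) : Prop :=
  (exists X : {set T}, nonlocal_resolving e X /\ #|X| = d) /\
  (forall X : {set T}, nonlocal_resolving e X -> d <= #|X|).

(* Wheel W_{1,n}: vertices option 'I_n, None is the center,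
   Some i are the cycle vertices 0..n-1, with i ~ i+1 (mod n). *)
Definition cyc_adj (n : nat) (i j : 'I_n) : bool :=
  (j == (i.+1 %% n) :> nat) || (i == (j.+1 %% n) :> nat).

Definition wheel_adj (n : nat) : rel (option 'I_n) := fun u v =>
  match u, v with
  | None, None => false
  | None, Some _ | Some _, None => true
  | Some i, Some j => (i != j) && cyc_adj i j
  end.

From mathcomp Require Import all_boot all_order zify.
Set Implicit Arguments. Unset Strict Implicit. Unset Printing Implicit Defensive.

(* On the wheel any two vertices are at distance 0, 1 or 2 and the centre is at
   distance 1 from every other vertex, so a set resolves all non-adjacent pairs iff
   its part P on the rim separates any two distinct non-adjacent rim vertices
   outside P by their sets of neighbours in P (their traces).
   Lower bound: vertices outside P with empty trace are pairwise adjacent, hence at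
   most two of them; vertices with a one-element trace are determined by it, hence
   at most |P| of them. Summing, over all rim vertices i, the inequality
     2 <= 2[i in P] + 2[empty trace] + [one-element trace] + [i+1 in P] + [i-1 in P]
   gives 2n <= 5|P| + 4, i.e. floor(2n/5) <= |P|.
   Upper bound: writing n = 5q + r, take the vertices 5t and 5t+2 (t < q), plus
   n-2 when r >= 3. Every chosen vertex has another one at distance two along the
   rim, which forces equal traces to come from equal vertices unless the trace is
   empty, and only the two adjacent vertices 5q-1 and 5q can have an empty trace. *)

Lemma val_ordS n (x : 'I_n) :
  (x.+1 < n /\ ordS x = x.+1 :> nat) \/ (x.+1 = n /\ ordS x = 0 :> nat).
Proof.
rewrite /=; case: (ltngtP x.+1 n) => h; [left | have := ltn_ord x; lia | right].
  by rewrite modn_small.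
by rewrite h modnn.
Qed.

Lemma val_ord_pred n (x : 'I_n) :
  (0 < x /\ ord_pred x = x.-1 :> nat) \/ (x = 0 :> nat /\ ord_pred x = n.-1 :> nat).
Proof.
rewrite /=; have := ltn_ord x; case: (nat_of_ord x) => [|k] h /=.
  by right; rewrite add0n modn_small //; lia.
by left; rewrite modnDr modn_small //; lia.
Qed.

(* Reduces a goal about neighbours on the cycle ['I_n] to linear arithmetic on
   the values of [ordS]/[ord_pred], which [val_ordS]/[val_ord_pred] describe. *)
Ltac cycle_lia a :=
  rewrite -?(inj_eq (@ord_inj _));
  repeat match goal with
  | |- context [nat_of_ord (@ordS ?m ?x)] =>
      move: (val_ordS x); generalize (nat_of_ord (@ordS m x))
  | |- context [nat_of_ord (@ord_pred ?m ?x)] =>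
      move: (val_ord_pred x); generalize (nat_of_ord (@ord_pred m x))
  end; move: (ltn_ord a); lia.

Section Cycle.
Variable n : nat.
Implicit Types a i j : 'I_n.

Lemma cyc_adjE i j : cyc_adj i j = (j == ordS i) || (j == ord_pred i).
Proof.
rewrite /cyc_adj; congr (_ || _); apply/eqP/eqP => [ij | ->].
  by rewrite (@val_inj _ _ _ i (ordS j)) ?ordSK.
exact: esym (congr1 val (ord_predK i)).
Qed.

Lemma cyc_adjC i j : cyc_adj i j = cyc_adj j i.
Proof. by rewrite /cyc_adj orbC. Qed.

Hypothesis n_gt4 : 4 < n.

Lemma cyc_adj_irr i : cyc_adj i i = false.
Proof. by apply/negbTE; rewrite cyc_adjE negb_or; cycle_lia i. Qed.

Lemma ordS_neq_pred a : ordS a != ord_pred a.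
Proof. cycle_lia a. Qed.

Lemma cyc_nadj_ordS_pred a : ~~ cyc_adj (ordS a) (ord_pred a).
Proof. rewrite cyc_adjE negb_or; cycle_lia a. Qed.

Lemma cyc_nadj_ordS3 a : ~~ cyc_adj a (ordS (ordS (ordS a))).
Proof. rewrite cyc_adjE negb_or; cycle_lia a. Qed.

Lemma cyc_nadj_pred3 a : ~~ cyc_adj a (ord_pred (ord_pred (ord_pred a))).
Proof. rewrite cyc_adjE negb_or; cycle_lia a. Qed.

Lemma cyc_nadj_ordS2_pred a : ~~ cyc_adj (ordS (ordS a)) (ord_pred a).
Proof. rewrite cyc_adjE negb_or; cycle_lia a. Qed.

Lemma card_cyc_clique (A : {set 'I_n}) :
  {in A &, forall b c, (b == c) || cyc_adj b c} -> #|A| <= 2.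
Proof.
move=> clA; have [->|[a aA]] := set_0Vmem A; first by rewrite cards0.
have nbr b : b \in A -> [|| b == a, b == ordS a | b == ord_pred a].
  by move=> bA; have := clA a b aA bA; rewrite cyc_adjE [a == b]eq_sym.
have le2 c : #|[set a; c]| <= 2 by rewrite cards2 ltnS leq_b1.
have [SA|SnA] := boolP (ordS a \in A).
  apply: (leq_trans _ (le2 (ordS a))); apply/subset_leq_card/subsetP => b bA.
  rewrite !inE; case/or3P: (nbr b bA) => [->|->|/eqP bP]; rewrite ?orbT //.
  have := clA _ _ SA bA.
  by rewrite bP (negbTE (ordS_neq_pred _)) (negbTE (cyc_nadj_ordS_pred _)).
apply: (leq_trans _ (le2 (ord_pred a))); apply/subset_leq_card/subsetP => b bA.
rewrite !inE; case/or3P: (nbr b bA) => [->|/eqP bS|->]; rewrite ?orbT //.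
by rewrite -bS bA in SnA.
Qed.

End Cycle.

Section WheelDistance.
Variable n : nat.
Notation e := (@wheel_adj n).

Lemma in_ball1 u v : (v \in ball e 1 u) = (v == u) || e u v.
Proof.
rewrite /ball /= !inE; congr (_ || _); apply/existsP/idP => [[x /andP[]]|euv].
  by rewrite inE => /eqP ->.
by exists u; rewrite inE eqxx.
Qed.

Lemma in_ball2 u v : v \in ball e 2 u.
Proof.
rewrite [ball e 2 u]/= -/(ball e 1 u) in_setU in_ball1 inE.
case: v => [j|]; last by case: u => [i|] /=; rewrite ?eqxx ?orbT.
by apply/orP; right; apply/existsP; exists None; rewrite in_ball1 /=; case: u.
Qed.

Lemma wheel_gdist u v : 1 < n ->
  gdist e u v = if v == u then 0 else if e u v then 1 else 2.
Proof.
move=> n_gt1; rewrite /gdist card_option card_ord.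
have -> : n.+1 = (n - 2).+3 by lia.
rewrite /= inE -/(ball e 1 u) -/(ball e 2 u) in_ball1 in_ball2.
by case: (v == u) => //=; case: (e u v).
Qed.

End WheelDistance.

Definition cyc_resolving n (P : pred 'I_n) : Prop :=
  forall a b, a != b -> ~~ cyc_adj a b -> ~~ P a -> ~~ P b ->
  exists2 y, P y & cyc_adj a y != cyc_adj b y.

Definition isolated n (P : pred 'I_n) (i : 'I_n) : bool :=
  [&& ~~ P i, ~~ P (ordS i) & ~~ P (ord_pred i)].

Lemma isolated_nadj n (P : pred 'I_n) (i y : 'I_n) : isolated P i -> P y -> cyc_adj i y = false.
Proof.
case/and3P=> _ PS Pp Py; rewrite cyc_adjE.
by apply/negbTE/norP; split; apply: contraTneq Py => ->.
Qed.

Section Resolving.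
Variable n : nat.
Hypothesis n_gt4 : 4 < n.
Notation e := (@wheel_adj n).
Implicit Types (P : pred 'I_n) (a b i y : 'I_n).

Lemma wheel_adj_Some i j : e (Some i) (Some j) = cyc_adj i j.
Proof. by rewrite /=; case: eqVneq => [->|//]; rewrite cyc_adj_irr. Qed.

Lemma cyc_resolvingP P :
  cyc_resolving P <->
  (forall a b, ~~ P a -> ~~ P b -> {in P, cyc_adj a =1 cyc_adj b} -> (a == b) || cyc_adj a b).
Proof.
split=> [HP a b Pa Pb tr_ab | HP a b ab nab Pa Pb].
  by apply/contraT => /norP[ab nab]; have [y /tr_ab ->] := HP a b ab nab Pa Pb; rewrite eqxx.
apply/exists_inP/contraT => /exists_inPn tr_ab.
suff: (a == b) || cyc_adj a b by rewrite (negbTE ab) (negbTE nab).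
by apply: HP => // y /tr_ab /negPn /eqP.
Qed.

Lemma cyc_resolving_of_nl X : nonlocal_resolving e X -> cyc_resolving (fun i => Some i \in X).
Proof.
move=> HX a b ab nab Pa Pb; have n_gt1 : 1 < n by lia.
have [||[y|] yX] := HX (Some a) (Some b); rewrite ?wheel_adj_Some // !wheel_gdist //.
have ya : y != a by apply: contraNneq Pa => <-.
have yb : y != b by apply: contraNneq Pb => <-.
rewrite !wheel_adj_Some !(inj_eq (@Some_inj _)) (negbTE ya) (negbTE yb) => dist_ab.
by exists y => //; move: dist_ab; case: (cyc_adj a y); case: (cyc_adj b y).
Qed.

Lemma nl_of_cyc_resolving P : cyc_resolving P -> nonlocal_resolving e (Some @: [set i | P i]).
Proof.
move=> HP [a|] [b|] //= ab; rewrite ab /= => nab; have n_gt1 : 1 < n by lia.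
have inX i : (Some i \in Some @: [set i | P i]) = P i.
  by rewrite mem_imset ?inE //; exact: Some_inj.
have dist0 i j : i != j -> gdist e (Some i) (Some i) != gdist e (Some j) (Some i).
  by move=> ij; rewrite !wheel_gdist // eqxx (inj_eq (@Some_inj _)) (negbTE ij); case: e.
case Pa: (P a); first by exists (Some a); rewrite ?inX ?dist0.
case Pb: (P b); first by exists (Some b); rewrite ?inX // eq_sym dist0 // eq_sym.
have [y Py tr_ab] := HP a b ab nab (negbT Pa) (negbT Pb).
have ya : y != a by apply: contraFneq Pa => <-.
have yb : y != b by apply: contraFneq Pb => <-.
exists (Some y); rewrite ?inX // !wheel_gdist // !wheel_adj_Some !(inj_eq (@Some_inj _)).
by rewrite (negbTE ya) (negbTE yb); move: tr_ab; case: (cyc_adj a y); case: (cyc_adj b y).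
Qed.

End Resolving.

Section LowerBound.
Variables (n : nat) (P : pred 'I_n).
Hypotheses (n_gt4 : 4 < n) (P_res : cyc_resolving P).
Implicit Types a b i y : 'I_n.

Lemma card_isolated : #|[set i | isolated P i]| <= 2.
Proof.
apply: card_cyc_clique => // a b; rewrite !inE => Ia Ib.
apply: (cyc_resolvingP P).1 => //; [by case/and3P: Ia | by case/and3P: Ib |].
by move=> y Py; rewrite (isolated_nadj Ia Py) (isolated_nadj Ib Py).
Qed.

Definition pendant i : bool := ~~ P i && (P (ordS i) != P (ord_pred i)).

Definition pendant_nbr i : 'I_n := if P (ordS i) then ordS i else ord_pred i.

Lemma pendant_nbrP i : pendant i -> P (pendant_nbr i).
Proof. by case/andP=> _; rewrite /pendant_nbr; case: ifP => // _ /negPn. Qed.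

Lemma pendant_adj i y : pendant i -> P y -> cyc_adj i y = (y == pendant_nbr i).
Proof.
case/andP=> _; rewrite cyc_adjE /pendant_nbr => PSp Py.
case PS: (P (ordS i)) PSp => /= Pp.
  by case: eqVneq => //= _; apply: contraTF Py => /eqP ->; rewrite Pp.
by case: eqVneq => //= ySi; rewrite ySi PS in Py.
Qed.

Lemma pendant_nbr_adj i : cyc_adj (pendant_nbr i) i.
Proof.
by rewrite cyc_adjE /pendant_nbr; case: ifP; rewrite ?ordSK ?ord_predK eqxx ?orbT.
Qed.

Lemma pendant_nbr_inj : {in [set i | pendant i] &, injective pendant_nbr}.
Proof.
move=> a b; rewrite !inE => Pa Pb ab_nbr.
have /orP[/eqP // | ab_adj] : (a == b) || cyc_adj a b.
  apply: (cyc_resolvingP P).1 => //; [by case/andP: Pa | by case/andP: Pb |].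
  by move=> y Py; rewrite !pendant_adj // ab_nbr.
have := pendant_nbr_adj a; have := pendant_nbr_adj b; rewrite -ab_nbr.
move: (pendant_nbr a) => c; rewrite !cyc_adjE.
have nadj := cyc_nadj_ordS_pred n_gt4 c; rewrite cyc_adjC in nadj.
case/orP=> /eqP eb /orP[] /eqP ea; move: ab_adj; rewrite ea eb ?cyc_adj_irr //.
- by move/(negP nadj).
- by rewrite cyc_adjC => /(negP nadj).
Qed.

Lemma card_pendant : #|[set i | pendant i]| <= #|[set i | P i]|.
Proof.
rewrite -(card_in_imset pendant_nbr_inj); apply/subset_leq_card/subsetP => y.
by case/imsetP => i; rewrite !inE => /pendant_nbrP Pi ->.
Qed.

Lemma card_cyc_resolving : (2 * n) %/ 5 <= #|[set i | P i]|.
Proof.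
have sum_card (p : pred 'I_n) : \sum_i (p i : nat) = #|[set i : 'I_n | p i]|.
  by rewrite -sum1_card [RHS]big_mkcond; apply: eq_bigr => i _; rewrite inE; case: (p i).
have sum_shift (f : 'I_n -> 'I_n) :
    injective f -> \sum_i (P (f i) : nat) = \sum_i (P i : nat).
  by move=> f_inj; rewrite [RHS](reindex_inj f_inj).
have : \sum_(i : 'I_n) 2 <= \sum_i
    (P i + P i + isolated P i + isolated P i + pendant i + P (ordS i) + P (ord_pred i)).
  apply: leq_sum => i _; rewrite /isolated /pendant.
  by case: (P i); case: (P (ordS i)); case: (P (ord_pred i)).
rewrite sum_nat_const card_ord !big_split /=.
rewrite (sum_shift _ (@ordS_inj n)) (sum_shift _ (@ord_pred_inj n)).
rewrite !(sum_card P) (sum_card (isolated P)) (sum_card pendant).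
(* These cardinals are convertible to, but not syntactically equal to, those of
   [card_isolated] and [card_pendant], so [lia] is applied to abstracted ones. *)
suff arith (k l m : nat) : n * 2 <= k + k + l + l + m + k + k -> l <= 2 -> m <= k ->
    (2 * n) %/ 5 <= k.
  by move/arith; apply; [exact: card_isolated | exact: card_pendant].
lia.
Qed.

End LowerBound.

Section UpperBound.
Variables (n : nat) (P : pred 'I_n).
Hypothesis n_gt4 : 4 < n.
Hypothesis P_pair : forall y, P y -> P (ordS (ordS y)) || P (ord_pred (ord_pred y)).
Hypothesis isolated_clique :
  forall a b, isolated P a -> isolated P b -> (a == b) || cyc_adj a b.

Lemma trace_ordS a b : ~~ P a -> {in P, cyc_adj a =1 cyc_adj b} -> P (ordS a) -> a = b.
Proof.
move=> Pa tr_ab PS; move: (tr_ab _ PS).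
rewrite [cyc_adj a _]cyc_adjE eqxx cyc_adjE => /esym/orP[/eqP/ordS_inj -> // | /eqP bSS].
have {bSS} bE : b = ordS (ordS a) by rewrite bSS ord_predK.
subst b.
case/orP: (P_pair PS) => [/tr_ab | ].
  by rewrite (negbTE (cyc_nadj_ordS3 n_gt4 a)) cyc_adjE eqxx.
by rewrite ordSK => /tr_ab; rewrite (negbTE (cyc_nadj_ordS2_pred n_gt4 a)) cyc_adjE eqxx orbT.
Qed.

Lemma trace_ord_pred a b :
  ~~ P a -> {in P, cyc_adj a =1 cyc_adj b} -> P (ord_pred a) -> a = b.
Proof.
move=> Pa tr_ab Pp; move: (tr_ab _ Pp).
rewrite [cyc_adj a _]cyc_adjE eqxx orbT cyc_adjE.
case/esym/orP => [/eqP pS | /eqP/ord_pred_inj -> //].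
have {pS} bE : b = ord_pred (ord_pred a) by rewrite pS ordSK.
subst b.
case/orP: (P_pair Pp) => [| /tr_ab]; first by rewrite ord_predK; apply: trace_ordS.
by rewrite (negbTE (cyc_nadj_pred3 n_gt4 a)) cyc_adjE eqxx orbT.
Qed.

Lemma cyc_resolving_of_pairs : cyc_resolving P.
Proof.
apply/cyc_resolvingP => a b Pa Pb tr_ab.
case PS: (P (ordS a)); first by rewrite (trace_ordS Pa tr_ab PS) eqxx.
case Pp: (P (ord_pred a)); first by rewrite (trace_ord_pred Pa tr_ab Pp) eqxx.
have Ia : isolated P a by rewrite /isolated Pa PS Pp.
apply: isolated_clique => //; apply/and3P; split=> //; apply/negP => /[dup] Py /tr_ab.
  by rewrite (isolated_nadj Ia Py) cyc_adjE eqxx.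
by rewrite (isolated_nadj Ia Py) cyc_adjE eqxx orbT.
Qed.

End UpperBound.

Lemma count_mod5_0_or_2 (Q : nat) :
  count (fun i => (i %% 5 == 0) || (i %% 5 == 2)) (iota 0 (5 * Q)) = 2 * Q.
Proof.
elim: Q => [//|Q IH].
rewrite mulnS addnC iotaD count_cat IH add0n -[5 * Q]addn0 iotaDl count_map.
rewrite (eq_count (a2 := fun i => (i %% 5 == 0) || (i %% 5 == 2))) //; last first.
  by move=> k /=; rewrite -[5 * Q]mulnC modnMDl.
by rewrite [count _ (iota 0 5)]/= addnC mulnS.
Qed.

Section Basis.
Variables q r : nat.
Hypotheses (q_gt0 : 0 < q) (r_lt5 : r < 5).

Definition basis (i : nat) : bool :=
  ((i < 5 * q) && ((i %% 5 == 0) || (i %% 5 == 2))) ||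
  ((3 <= r) && (i == 5 * q + r - 2)).

Lemma basis_head i : i < 5 * q -> basis i = (i %% 5 == 0) || (i %% 5 == 2).
Proof.
move=> iq; rewrite /basis iq /=.
by case: ((i %% 5 == 0) || (i %% 5 == 2)) => //=; apply/negbTE/negP => /andP[r3 /eqP]; lia.
Qed.

Lemma basis_tail j : basis (5 * q + j) = (3 <= r) && (j == r - 2).
Proof.
rewrite /basis ltnNge leq_addr /=.
by case: (leqP 3 r) => //= r3; apply/eqP/eqP; lia.
Qed.

Lemma basis0 : basis 0.
Proof. by rewrite basis_head ?muln_gt0. Qed.

Lemma basis_pair y : y < 5 * q + r -> basis y ->
  [\/ y.+2 < 5 * q + r /\ basis y.+2, y.+2 = 5 * q + r | 2 <= y /\ basis (y - 2)].
Proof.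
move=> yn; rewrite {1}/basis => /orP[/andP[y_lt ys]|/andP[r3 /eqP ->]];
  last by apply: Or32; lia.
case/orP: ys => /eqP ys; [apply: Or31 | apply: Or33]; (split; first by lia).
  by rewrite basis_head; lia.
by rewrite basis_head; lia.
Qed.

Lemma basis_gap a : a.+1 < 5 * q + r -> ~~ basis a -> ~~ basis a.+1 ->
  (0 < a -> ~~ basis a.-1) -> a.+1 = 5 * q \/ a = 5 * q.
Proof.
move=> an pa pa1 pa0.
case: (ltnP a.+1 (5 * q)) => [a1_lt|]; last case: (leqP a (5 * q)) => [|a_gt]; try lia.
  have pa0' : ~~ basis a.-1.
    by case: (posnP a) => [a0|/pa0 //]; rewrite a0 basis0 in pa.
  by move: pa pa1 pa0'; rewrite !basis_head; lia.
move: pa pa1; rewrite (_ : a = 5 * q + (a - 5 * q)); last by lia.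
by rewrite -addnS !basis_tail; case: (leqP 3 r) => /= [r3 /eqP ? /eqP|]; lia.
Qed.

Lemma count_basis : count basis (iota 0 (5 * q + r)) = 2 * q + (3 <= r).
Proof.
rewrite iotaD count_cat add0n -(count_mod5_0_or_2 q).
congr (_ + _).
  by apply: eq_in_count => i; rewrite mem_iota => /andP[_ hi]; apply: basis_head.
rewrite -[5 * q]addn0 iotaDl count_map (eq_count (a2 := fun j => (3 <= r) && (j == r - 2))).
  by case: r r_lt5 => [|[|[|[|[|]]]]].
by move=> j /=; rewrite basis_tail.
Qed.

End Basis.

Section BasisCycle.
Variables n q r : nat.
Hypotheses (n_eq : n = 5 * q + r) (q_gt0 : 0 < q) (r_lt5 : r < 5).
Let P : pred 'I_n := fun i => basis q r i.

Lemma basis_cyc_pair y : P y -> P (ordS (ordS y)) || P (ord_pred (ord_pred y)).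
Proof.
rewrite /P => Py; have y_lt : y < 5 * q + r by rewrite -n_eq.
have := val_ordS (ordS y); have := val_ordS y.
have := val_ord_pred (ord_pred y); have := val_ord_pred y.
case: (basis_pair q_gt0 r_lt5 y_lt Py) => [[y2_lt Py2] | y2_eq | [y_ge2 Py2]] *.
- by rewrite (_ : nat_of_ord _ = y.+2) ?Py2 //; lia.
- by rewrite (_ : nat_of_ord (ordS (ordS y)) = 0) ?basis0 //; lia.
- by rewrite (_ : nat_of_ord (ord_pred _) = y - 2) ?Py2 ?orbT //; lia.
Qed.

Lemma basis_cyc_isolated a : isolated P a -> a.+1 = 5 * q \/ a = 5 * q :> nat.
Proof.
case/and3P; rewrite /P => Pa PS Pp.
have a1_lt : a.+1 < 5 * q + r.
  rewrite -n_eq ltn_neqAle ltn_ord andbT; apply: contraNneq PS => a1_eq.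
  by rewrite (_ : ordS a = 0 :> nat) ?basis0 //; move: (val_ordS a); lia.
apply: (basis_gap q_gt0 r_lt5 a1_lt) => //.
  by rewrite (_ : a.+1 = ordS a :> nat) //; move: (val_ordS a); lia.
by move=> a_gt0; rewrite (_ : a.-1 = ord_pred a :> nat) //; move: (val_ord_pred a); lia.
Qed.

Lemma basis_cyc_clique a b : isolated P a -> isolated P b -> (a == b) || cyc_adj a b.
Proof.
move=> /basis_cyc_isolated Ia /basis_cyc_isolated Ib.
rewrite cyc_adjE; move: (ltn_ord b); cycle_lia a.
Qed.

End BasisCycle.

Lemma card_ord_count n (p : pred nat) : #|[set i : 'I_n | p i]| = count p (iota 0 n).
Proof.
rewrite -sum1_card (eq_bigl (fun i : 'I_n => p i)) => [|i]; last by rewrite inE.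
by rewrite -(big_mkord p (fun _ => 1)) sum1_count /index_iota subn0.
Qed.

Lemma wheel_nl_lower n (X : {set option 'I_n}) :
  4 < n -> nonlocal_resolving (@wheel_adj n) X -> (2 * n) %/ 5 <= #|X|.
Proof.
move=> n_gt4 /(cyc_resolving_of_nl n_gt4) /(card_cyc_resolving n_gt4) /leq_trans; apply.
rewrite -(card_imset _ (@Some_inj _)); apply/subset_leq_card/subsetP => y /imsetP[i].
by rewrite inE => iX ->.
Qed.

Lemma wheel_nl_upper n :
  4 < n -> exists2 X, nonlocal_resolving (@wheel_adj n) X & #|X| = (2 * n) %/ 5.
Proof.
move=> n_gt4; set q := n %/ 5; set r := n %% 5.
have n_eq : n = 5 * q + r by rewrite mulnC -divn_eq.
have q_gt0 : 0 < q by rewrite divn_gt0.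
have r_lt5 : r < 5 by rewrite ltn_mod.
exists (Some @: [set i : 'I_n | basis q r i]).
  apply/nl_of_cyc_resolving/cyc_resolving_of_pairs => //.
    exact: basis_cyc_pair.
  exact: basis_cyc_clique.
rewrite card_imset; last exact: Some_inj.
rewrite card_ord_count {1}n_eq count_basis //.
by move: r_lt5 n_eq; case: r => [|[|[|[|[|]]]]] // _ ->; lia.
Qed.

Theorem theorem4p1 (n : nat) : 7 <= n -> is_nl_dim (@wheel_adj n) ((2 * n) %/ 5).
Proof.
move=> n_ge7; have n_gt4 : 4 < n by apply: leq_trans n_ge7.
split=> [|X]; last exact: wheel_nl_lower.
by have [X ? ?] := wheel_nl_upper n_gt4; exists X.
Qed.
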